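(* Let $k\ge 4$ be even and $n$ odd with $2k\le n$ and $n\equiv\pm 2\pmod{k-1}$. Then $$\chi_c(\mathrm{Pet}(n,k))\ \le\ \frac{2n(k-1)}{(n-4)(k-2)}.$$
   Context: For integers $n,k$ with $2<2k\le n$, the generalized Petersen graph $\mathrm{Pet}(n,k)$ has vertex set $\{u_0,\dots,u_{n-1}\}\cup\{v_0,\dots,v_{n-1}\}$ and edge set $\{u_iu_{i+1}\}\cup\{u_iv_i\}\cup\{v_iv_{i+k}\}$, indices modulo $n$. For integers $p\ge 2q\ge 2$, the circular complete graph $K_{p/q}$ has vertex set $\{0,\dots,p-1\}$ with $i\sim j$ iff $q\le|i-j|\le p-q$; the circular chromatic number $\chi_c(G)$ is the minimum of $p/q$ over all such $p,q$ for which $G$ admits a homomorphism to $K_{p/q}$. *)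

From mathcomp Require Import all_boot.

(* Vertices of Pet(n,k): (false, i) is u_i, (true, i) is v_i, i : 'I_n. *)
Definition pet_vertex (n : nat) : finType := (bool * 'I_n)%type.

Definition pet_arc (n k : nat) (x y : pet_vertex n) : bool :=
  match x, y with
  | (false, i), (false, j) => j == (i + 1) %% n :> nat
  | (false, i), (true, j) => i == j
  | (true, i), (true, j) => j == (i + k) %% n :> nat
  | _, _ => false
  end.

Definition pet_adj (n k : nat) : rel (pet_vertex n) :=
  fun x y => pet_arc n k x y || pet_arc n k y x.

Definition circ_adj (p q : nat) (i j : 'I_p) : bool :=
  let d := maxn i j - minn i j in (q <= d) && (d <= p - q).

Definition hom_to_circ {T : finType} (adj : rel T) (p q : nat) : Prop :=
  exists f : T -> 'I_p, forall x y, adj x y -> circ_adj p q (f x) (f y).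

From mathcomp Require Import all_boot zify.

(* The bound is witnessed by a "linear" colouring into K_{n/q}: u_i is sent
   to i m and v_i to i m + n/2 modulo n.  Its three edge classes shift the
   colour by m, n/2 and k m, so it is a homomorphism as soon as these three
   residues lie at circular distance at least q from 0.  Writing k = 2h, the
   congruence n = +-2 (mod k-1) lets one take m and k m = m +- 1 (mod n) both
   close to q = n(k-2)/(2(k-1)) up to O(1), which gives the stated ratio. *)

Set Implicit Arguments.
Unset Strict Implicit.
Unset Printing Implicit Defensive.

Lemma circ_adjC p q : symmetric (circ_adj p q).
Proof. by move=> a b; rewrite /circ_adj maxnC minnC. Qed.

Definition circ_far (n q c : nat) : bool := q <= c %% n <= n - q.

Lemma circ_far_small n q c : q <= c <= n - q -> 0 < q -> circ_far n q c.
Proof. by move=> c_bounds q_gt0; rewrite /circ_far modn_small //; lia. Qed.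

Section LinearColouring.

Variables (n k q : nat) (n_gt0 : 0 < n).

Definition ord_mod (x : nat) : 'I_n := Ordinal (ltn_pmod x n_gt0).

Lemma circ_adj_ord_modD x y c :
  circ_far n q c -> y = x + c %[mod n] -> circ_adj n q (ord_mod x) (ord_mod y).
Proof.
rewrite /circ_far => /andP[c_ge c_le] y_mod; rewrite /circ_adj /= y_mod -modnDm.
have := ltn_pmod x n_gt0; have := ltn_pmod c n_gt0.
move: c_ge c_le; set a := x %% n; set b := c %% n => c_ge c_le b_lt a_lt.
have [ab_lt | ab_ge] := ltnP (a + b) n.
  by rewrite modn_small //; apply/andP; split; lia.
have -> : a + b = (a + b - n) + n by lia.
by rewrite modnDr modn_small; [apply/andP; split; lia | lia].
Qed.

Lemma pet_hom_linear m t :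
  circ_far n q m -> circ_far n q t -> circ_far n q (k * m) ->
  hom_to_circ (pet_adj n k) n q.
Proof.
move=> far_m far_t far_km.
pose f (x : pet_vertex n) :=
  let: (spoke, i) := x in ord_mod (i * m + (if spoke then t else 0)).
have arc_ok x y : pet_arc n k x y -> circ_adj n q (f x) (f y).
  case: x y => [[] i] [[] j] //= /eqP ->; rewrite ?addn0.
  - by apply: circ_adj_ord_modD far_km _; rewrite -modnDml modnMml modnDml mulnDl addnAC.
  - exact: circ_adj_ord_modD far_t _.
  - by apply: circ_adj_ord_modD far_m _; rewrite modnMml mulnDl mul1n.
by exists f => x y /orP[/arc_ok // | /arc_ok]; rewrite circ_adjC.
Qed.

End LinearColouring.

Lemma pet_circ_ratio_bound n k q m r a :
  0 < q -> 2 * q <= n -> q <= m <= n - q -> q <= r <= n - q ->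
  k * m = r + a * n -> (n - 4) * (k - 2) <= 2 * (k - 1) * q ->
  exists p q : nat,
    [/\ 1 <= q, 2 * q <= p,
        p * ((n - 4) * (k - 2)) <= 2 * n * (k - 1) * q &
        hom_to_circ (pet_adj n k) p q].
Proof.
move=> q_gt0 qn m_bounds r_bounds km ratio.
exists n, q; split=> //.
  by rewrite -[2 * n]mulnC -!mulnA leq_mul2l mulnA ratio orbT.
apply: (@pet_hom_linear n k q _ m n./2); first by lia.
- exact: circ_far_small.
- by apply: circ_far_small => //; lia.
- by rewrite /circ_far km addnC modnMDl modn_small; lia.
Qed.

Theorem corollary6 (n k : nat) :
  4 <= k -> ~~ odd k -> odd n -> 2 * k <= n ->
  (n = 2 %[mod k.-1] \/ n + 2 = 0 %[mod k.-1]) ->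
  exists p q : nat,
    [/\ 1 <= q, 2 * q <= p,
        p * ((n - 4) * (k - 2)) <= 2 * n * (k - 1) * q &
        hom_to_circ (pet_adj n k) p q].
Proof.
move=> k_ge4 k_even _ kn.
have [h k_eq] : exists h, k = 2 * h.
  by exists k./2; rewrite -[LHS]odd_double_half (negbTE k_even) -muln2 mulnC.
subst k; have d_eq : (2 * h).-1 = 2 * h - 1 by lia.
rewrite d_eq => -[n_mod | n_mod].
- have /dvdnP[j n2_eq] : 2 * h - 1 %| n - 2 by rewrite -eqn_mod_dvd ?n_mod; lia.
  have {n2_eq n_mod} n_eq : n = 2 + j * (2 * h - 1) by lia.
  subst n; apply: (@pet_circ_ratio_bound _ _ (1 + j * (h - 1)) (1 + j * (h - 1))
                     (2 + j * (h - 1)) (h - 1)); nia.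
- have /dvdnP[j n2_eq] : 2 * h - 1 %| n + 2 by rewrite /dvdn n_mod mod0n.
  have {n2_eq n_mod} n_eq : n = j * (2 * h - 1) - 2 by lia.
  subst n; apply: (@pet_circ_ratio_bound _ _ (j * (h - 1) - 2) (j * (h - 1) - 1)
                     (j * (h - 1) - 2) (h - 1)); nia.
Qed.
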